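(* Let $\Re$ be a commutative Krasner hyperring with identity $1\ne0$ and $\phi:L(\Re)\to L(\Re)\cup\{\emptyset\}$ a function with $\phi\le\phi_3$. If $T$ is a proper $\phi$-primary hyperideal of $\Re$, then $T$ is a $w$-primary hyperideal.
   Context: Krasner hyperring: $(\Re,\oplus)$ canonical hypergroup, $(\Re,\circ)$ commutative semigroup with identity $1\ne0$, $0$ absorbing, distributive. Hyperideals, $L(\Re)$, powers $N^n$ as usual. $\phi_3(N)=N^3$, $\phi_w(N)=\bigcap_{n\ge1}N^n$; $\phi\le\phi_3$ means $\phi(N)\subseteq N^3$ for all $N$. $N$ is $\sigma$-primary if $a\circ b\in N$, $a\circ b\notin\sigma(N)$ imply $a\in N$ or $b^k\in N$ for some $k\in\mathbb{N}$; $w$-primary means $\phi_w$-primary. *)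

From Stdlib Require Import List.
Import ListNotations.

(* A commutative Krasner hyperring with identity 1 <> 0.
   hplus x y z  means  z \in x (+) y. *)
Record KrasnerHyperring := {
  carrier :> Type;
  hplus : carrier -> carrier -> carrier -> Prop;
  hzero : carrier;
  hneg : carrier -> carrier;
  hmul : carrier -> carrier -> carrier;
  hone : carrier;
  hplus_nonempty : forall x y, exists z, hplus x y z;
  hplus_assoc : forall x y z w,
    (exists u, hplus x y u /\ hplus u z w) <-> (exists v, hplus y z v /\ hplus x v w);
  hplus_comm : forall x y z, hplus x y z <-> hplus y x z;
  hplus_zero : forall x z, hplus hzero x z <-> z = x;
  hplus_neg : forall x, hplus x (hneg x) hzero;
  hplus_neg_unique : forall x y, hplus x y hzero -> y = hneg x;
  hplus_reversible : forall x y z, hplus x y z -> hplus (hneg x) z y /\ hplus z (hneg y) x;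
  hmul_assoc : forall x y z, hmul x (hmul y z) = hmul (hmul x y) z;
  hmul_comm : forall x y, hmul x y = hmul y x;
  hmul_one : forall x, hmul hone x = x;
  hone_neq_zero : hone <> hzero;
  hmul_zero : forall x, hmul hzero x = hzero;
  (* distributivity: z o (x (+) y) = z o x (+) z o y  (as sets) *)
  hmul_distr : forall x y z w,
    (exists u, hplus x y u /\ w = hmul z u) <-> hplus (hmul z x) (hmul z y) w
}.

Arguments hplus {R} : rename.
Arguments hzero {R} : rename.
Arguments hneg {R} : rename.
Arguments hmul {R} : rename.
Arguments hone {R} : rename.

Section Defs.
Variable R : KrasnerHyperring.

Definition hset := R -> Prop.

Definition hyperideal (I : hset) : Prop :=
  (exists a, I a) /\
  (forall a b z, I a -> I b -> hplus a (hneg b) z -> I z) /\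
  (forall r a, I a -> I (hmul r a)).

Definition proper (I : hset) : Prop := ~ (forall x, I x).

Fixpoint hsum (x : R) (l : list R) : hset :=
  match l with
  | [] => fun z => z = x
  | y :: l' => fun z => exists u, hsum y l' u /\ hplus x u z
  end.

(* product of hyperideals: union of all finite hypersums sum_i a_i o b_i *)
Definition hprod (I J : hset) : hset := fun z =>
  exists (a0 b0 : R) (l : list (R * R)),
    I a0 /\ J b0 /\ (forall p, In p l -> I (fst p) /\ J (snd p)) /\
    hsum (hmul a0 b0) (map (fun p => hmul (fst p) (snd p)) l) z.

(* N^n for n >= 1 : hpow N n = N^(n+1) *)
Fixpoint hpow (N : hset) (n : nat) : hset :=
  match n with
  | O => N
  | S m => hprod (hpow N m) N
  end.

(* N^n with the usual indexing, for n >= 1 *)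
Definition hipow (N : hset) (n : nat) : hset := hpow N (pred n).

Fixpoint mpow (b : R) (k : nat) : R :=
  match k with
  | O => hone
  | S m => hmul b (mpow b m)
  end.

Definition phi_3 (N : hset) : hset := hipow N 3.
Definition phi_w (N : hset) : hset := fun x => forall n, 1 <= n -> hipow N n x.

Definition sigma_primary (sigma : hset -> hset) (N : hset) : Prop :=
  hyperideal N /\ proper N /\
  forall a b, N (hmul a b) -> ~ sigma N (hmul a b) ->
    N a \/ exists k, 1 <= k /\ N (mpow b k).

Definition w_primary (N : hset) : Prop := sigma_primary phi_w N.

End Defs.

Arguments hyperideal {R}.
Arguments proper {R}.
Arguments hipow {R}.
Arguments phi_3 {R}.
Arguments phi_w {R}.
Arguments sigma_primary {R}.
Arguments w_primary {R}.

(* Suppose a o b is in T while a is not in T and no power of b is. Then a o b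
   lies in phi(T), and this "twin zero" spreads: for i, j in T, perturbing a
   to some z in a (+) i keeps z outside T and z o b inside T, so a o j and
   z o j lie in phi(T), and hence so does i o j, which is in z o j - a o j.
   Thus T^2 is contained in phi(T), which is contained in T^3 and so in T^2.
   The powers T^n stabilise at T^2 from n = 2 on, and a o b, lying in T^3,
   lies in every T^n: the hypothesis that a o b is outside phi_w(T) fails. *)

From Stdlib Require Import List Classical Lia.

Section Hyperring.

Variable R : KrasnerHyperring.

Definition hplus_closed (Q : hset R) : Prop :=
  forall x y z, Q x -> Q y -> hplus x y z -> Q z.

Definition hradical (I : hset R) : hset R :=
  fun y => exists k, 1 <= k /\ I (mpow R y k).

Lemma hneg_involutive (x : R) : hneg (hneg x) = x.
Proof.
  symmetry. apply hplus_neg_unique. apply hplus_comm. apply hplus_neg.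
Qed.

Lemma hmul_hplus (x y z w : R) :
  hplus x y w -> hplus (hmul z x) (hmul z y) (hmul z w).
Proof.
  intro H. apply (proj1 (hmul_distr R x y z (hmul z w))). exists w. auto.
Qed.

Section Hyperideal.

Variable I : hset R.
Hypothesis HI : hyperideal I.

Lemma hyperideal_zero : I hzero.
Proof.
  destruct HI as [[a Ha] [_ Hmul]]. rewrite <- (hmul_zero R a). auto.
Qed.

Lemma hyperideal_neg (x : R) : I x -> I (hneg x).
Proof.
  intro Hx. destruct HI as [_ [Hsub _]].
  apply (Hsub hzero x); auto using hyperideal_zero.
  apply hplus_zero. reflexivity.
Qed.

Lemma hyperideal_hplus_closed : hplus_closed I.
Proof.
  intros x y z Hx Hy H. destruct HI as [_ [Hsub _]].
  apply (Hsub x (hneg y)); auto using hyperideal_neg.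
  rewrite hneg_involutive. exact H.
Qed.

Lemma hyperideal_mul (r x : R) : I x -> I (hmul r x).
Proof. destruct HI as [_ [_ Hmul]]. auto. Qed.

Lemma hyperideal_hplus_notin (x i z : R) :
  ~ I x -> I i -> hplus x i z -> ~ I z.
Proof.
  intros Hx Hi H Hz. apply Hx.
  apply (hyperideal_hplus_closed z (hneg i)); auto using hyperideal_neg.
  exact (proj2 (hplus_reversible R x i z H)).
Qed.

Lemma mpow_hplus_mod (x j y : R) (k : nat) :
  I j -> hplus x j y -> exists t, I t /\ hplus (mpow R x k) t (mpow R y k).
Proof.
  intros Hj H. induction k as [|k [t [Ht Hk]]]; simpl.
  - exists hzero. split; [exact hyperideal_zero|].
    apply hplus_comm, hplus_zero. reflexivity.
  - (* y^(k+1) is in y o x^k (+) y o t, and y o x^k is in x^(k+1) (+) x^k o j *)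
    pose proof (hmul_hplus _ _ y _ Hk) as Hyk.
    pose proof (hmul_hplus _ _ (mpow R x k) _ H) as Hxk.
    rewrite (hmul_comm R (mpow R x k) x), (hmul_comm R (mpow R x k) y) in Hxk.
    destruct (proj1 (hplus_assoc R _ _ _ _) (ex_intro _ _ (conj Hxk Hyk)))
      as [v [Hv Hsum]].
    exists v. split; [|exact Hsum].
    apply (hyperideal_hplus_closed _ _ _ (hyperideal_mul _ _ Hj)
             (hyperideal_mul _ _ Ht) Hv).
Qed.

Lemma hradical_hplus (x j y : R) :
  I j -> hplus x j y -> hradical I x -> hradical I y.
Proof.
  intros Hj H [k [Hk Hx]]. exists k. split; [exact Hk|].
  destruct (mpow_hplus_mod x j y k Hj H) as [t [Ht Hsum]].
  exact (hyperideal_hplus_closed _ _ _ Hx Ht Hsum).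
Qed.

Lemma hradical_hplus_notin (y j w : R) :
  ~ hradical I y -> I j -> hplus y j w -> ~ hradical I w.
Proof.
  intros Hy Hj H Hw. apply Hy.
  apply (hradical_hplus w (hneg j)); auto using hyperideal_neg.
  exact (proj2 (hplus_reversible R y j w H)).
Qed.

End Hyperideal.

Lemma hsum_closed (Q : hset R) (l : list R) (x z : R) :
  hplus_closed Q -> Q x -> (forall y, In y l -> Q y) -> hsum R x l z -> Q z.
Proof.
  intro HQ. revert x z.
  induction l as [|y l IH]; intros x z Hx Hl H; simpl in H.
  - subst. exact Hx.
  - destruct H as [u [Hu Hsum]]. apply (HQ x u z Hx); [|exact Hsum].
    apply (IH y u); auto using in_eq, in_cons.
Qed.

Lemma hsum_mul (r : R) (l : list R) (x z : R) :
  hsum R x l z -> hsum R (hmul r x) (map (hmul r) l) (hmul r z).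
Proof.
  revert x z.
  induction l as [|y l IH]; intros x z H; simpl in *.
  - subst. reflexivity.
  - destruct H as [u [Hu Hsum]]. exists (hmul r u). auto using hmul_hplus.
Qed.

Lemma hsum_app (l1 l2 : list R) (m n x y z : R) :
  hsum R m l1 x -> hsum R n l2 y -> hplus x y z -> hsum R m (l1 ++ n :: l2) z.
Proof.
  revert m x z.
  induction l1 as [|m' l1 IH]; intros m x z Hx Hy H; simpl in *.
  - subst. exists y. auto.
  - destruct Hx as [u [Hu Hsum]].
    destruct (proj1 (hplus_assoc R m u y z) (ex_intro _ x (conj Hsum H)))
      as [v [Hv1 Hv2]].
    exists v. split; [|exact Hv2]. exact (IH m' u v Hu Hy Hv1).
Qed.

Lemma hprod_hplus_closed (I J : hset R) : hplus_closed (hprod R I J).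
Proof.
  intros x y z [a0 [b0 [l [Ha [Hb [Hl Hx]]]]]]
    [c0 [d0 [l' [Hc [Hd [Hl' Hy]]]]]] H.
  exists a0, b0, (l ++ (c0, d0) :: l'). split; [exact Ha|]. split; [exact Hb|].
  split.
  - intros p Hp. apply in_app_or in Hp.
    destruct Hp as [Hp|[<-|Hp]]; auto.
  - rewrite map_app. simpl. eapply hsum_app; eauto.
Qed.

Lemma hprod_mul (I J : hset R) (r x : R) :
  hyperideal I -> hprod R I J x -> hprod R I J (hmul r x).
Proof.
  intros HI [a0 [b0 [l [Ha [Hb [Hl Hx]]]]]].
  exists (hmul r a0), b0, (map (fun p => (hmul r (fst p), snd p)) l).
  split; [exact (hyperideal_mul I HI r a0 Ha)|]. split; [exact Hb|]. split.
  - intros p Hp. apply in_map_iff in Hp. destruct Hp as [q [<- Hq]].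
    destruct (Hl q Hq) as [Hq1 Hq2]. split; [exact (hyperideal_mul I HI r _ Hq1) | exact Hq2].
  - rewrite <- hmul_assoc, map_map.
    replace (map _ l) with (map (hmul r) (map (fun p : R * R => hmul (fst p) (snd p)) l)).
    + exact (hsum_mul r _ _ _ Hx).
    + rewrite map_map. apply map_ext. intro. apply hmul_assoc.
Qed.

Lemma hprod_least (I J Q : hset R) :
  hplus_closed Q -> (forall a b, I a -> J b -> Q (hmul a b)) ->
  forall z, hprod R I J z -> Q z.
Proof.
  intros HQ Hgen z [a0 [b0 [l [Ha [Hb [Hl Hz]]]]]].
  refine (hsum_closed Q _ _ _ HQ (Hgen a0 b0 Ha Hb) _ Hz).
  intros y Hy. apply in_map_iff in Hy. destruct Hy as [p [<- Hp]].
  destruct (Hl p Hp). auto.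
Qed.

Lemma hprod_monol (I I' J : hset R) (z : R) :
  (forall x, I x -> I' x) -> hprod R I J z -> hprod R I' J z.
Proof.
  intros HII' [a0 [b0 [l [Ha [Hb [Hl Hz]]]]]].
  exists a0, b0, l. split; [auto|]. split; [exact Hb|]. split; [|exact Hz].
  intros p Hp. destruct (Hl p Hp). auto.
Qed.

Lemma hprod_subl (L K : hset R) :
  hplus_closed L -> (forall r x, L x -> L (hmul r x)) ->
  forall z, hprod R L K z -> L z.
Proof.
  intros Hadd Hmul. apply hprod_least; [exact Hadd|].
  intros a b Ha _. rewrite hmul_comm. auto.
Qed.

Lemma hpow_stable (N : hset R) :
  (forall z, hprod R N N z -> hpow R N 2 z) ->
  forall m z, hprod R N N z -> hpow R N (S m) z.
Proof.
  intros Hstab m. induction m as [|m IH]; intros z Hz; [exact Hz|].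
  exact (hprod_monol _ _ _ _ IH (Hstab z Hz)).
Qed.

Lemma phi_w_of_stable_sq (N : hset R) (x : R) :
  (forall z, hprod R N N z -> phi_3 N z) -> N x -> hprod R N N x -> phi_w N x.
Proof.
  intros Hstab Hx Hx2 [|[|m]] Hn; [lia | exact Hx |].
  exact (hpow_stable N Hstab m x Hx2).
Qed.

Section TwinZero.

Variables T P : hset R.
Hypothesis HT : hyperideal T.
Hypothesis HP : hyperideal P.
Hypothesis HTP : forall x y,
  T (hmul x y) -> ~ T x -> ~ hradical T y -> P (hmul x y).

(* For w in y (+) j, x o w is again a twin zero, and x o j lies in x o w - x o y. *)
Lemma twin_zero_mul (x y j : R) :
  ~ T x -> ~ hradical T y -> T (hmul x y) -> T j -> P (hmul x j).
Proof.
  intros Hx Hy Hxy Hj.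
  destruct (hplus_nonempty R y j) as [w Hw].
  pose proof (hmul_hplus _ _ x _ Hw) as Hxw.
  assert (Pxw : P (hmul x w)).
  { apply HTP; [| exact Hx | exact (hradical_hplus_notin T HT y j w Hy Hj Hw)].
    exact (hyperideal_hplus_closed T HT _ _ _ Hxy (hyperideal_mul T HT _ _ Hj) Hxw). }
  pose proof (HTP x y Hxy Hx Hy) as Pxy.
  exact (hyperideal_hplus_closed P HP _ _ _ (hyperideal_neg P HP _ Pxy) Pxw
           (proj1 (hplus_reversible R _ _ _ Hxw))).
Qed.

Lemma twin_zero_hprod (a b : R) :
  ~ T a -> ~ hradical T b -> T (hmul a b) -> forall z, hprod R T T z -> P z.
Proof.
  intros Ha Hb Hab.
  apply hprod_least; [exact (hyperideal_hplus_closed P HP)|].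
  intros i j Hi Hj.
  destruct (hplus_nonempty R a i) as [z Hz].
  assert (Hzb : T (hmul z b)).
  { rewrite hmul_comm.
    apply (hyperideal_hplus_closed T HT (hmul b a) (hmul b i));
      [ rewrite hmul_comm; exact Hab | exact (hyperideal_mul T HT _ _ Hi)
      | exact (hmul_hplus _ _ b _ Hz) ]. }
  pose proof (twin_zero_mul z b j (hyperideal_hplus_notin T HT a i z Ha Hi Hz)
                Hb Hzb Hj) as Pzj.
  pose proof (twin_zero_mul a b j Ha Hb Hab Hj) as Paj.
  pose proof (proj1 (hplus_reversible R _ _ _ (hmul_hplus _ _ j _ Hz))) as Hji.
  rewrite (hmul_comm R j a), (hmul_comm R j z), (hmul_comm R j i) in Hji.
  exact (hyperideal_hplus_closed P HP _ _ _ (hyperideal_neg P HP _ Paj) Pzj Hji).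
Qed.

End TwinZero.

End Hyperring.

Theorem mainTheorem13 (R : KrasnerHyperring) (phi : hset R -> hset R)
  (phi_range : forall N : hset R, hyperideal N ->
      hyperideal (phi N) \/ (forall x, ~ phi N x))
  (phi_le_phi3 : forall N : hset R, hyperideal N ->
      forall x, phi N x -> phi_3 N x)
  (T : hset R) (HT : hyperideal T) (HTp : proper T)
  (HTphi : sigma_primary phi T) :
  w_primary T.
Proof.
  destruct HTphi as [_ [_ Hprim]].
  split; [exact HT|]. split; [exact HTp|].
  intros a b Hab Hnw.
  destruct (classic (T a)) as [Ha|Ha]; [left; exact Ha|].
  destruct (classic (hradical R T b)) as [Hb|Hb]; [right; exact Hb|].
  exfalso. apply Hnw.
  assert (Htwin : forall x y, T (hmul x y) -> ~ T x -> ~ hradical R T y ->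
                    phi T (hmul x y)).
  { intros x y Hxy Hx Hy. apply NNPP. intro Hn.
    destruct (Hprim x y Hxy Hn); contradiction. }
  pose proof (Htwin a b Hab Ha Hb) as Pab.
  assert (HP : hyperideal (phi T)).
  { destruct (phi_range T HT) as [HP|Hempty]; [exact HP|].
    destruct (Hempty _ Pab). }
  assert (T3_T2 : forall z, phi_3 T z -> hprod R T T z).
  { apply hprod_subl; [apply hprod_hplus_closed|].
    intros r x. apply hprod_mul, HT. }
  apply phi_w_of_stable_sq; [| exact Hab | exact (T3_T2 _ (phi_le_phi3 T HT _ Pab))].
  intros z Hz.
  exact (phi_le_phi3 T HT z (twin_zero_hprod R T (phi T) HT HP Htwin a b Ha Hb Hab z Hz)).
Qed.
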